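(* Let $\mathscr F$ be a class of functions $\Omega\to[0,1]$, $\varepsilon>0$ and $d\in\mathbb N$. The following are equivalent: (1) $\mathrm{fat}_\varepsilon(\mathscr F\,\mathrm{mod}\,\omega_1)\le d$; (2) for every countable subclass $\mathscr F'\subseteq\mathscr F$ there is a countable set $N\subseteq\Omega$ (depending on $\mathscr F'$) such that $\mathrm{fat}_\varepsilon(\mathscr F'\restriction(\Omega\setminus N))\le d$.
   Context: A finite $A\subseteq X$ is $\varepsilon$-fat shattered by $\mathscr F$ if there is $h:A\to[0,1]$ such that for every $B\subseteq A$ some $f_B\in\mathscr F$ has $f_B(a)>h(a)+\varepsilon$ for $a\in B$ and $f_B(a)<h(a)-\varepsilon$ for $a\in A\setminus B$; $\mathrm{fat}_\varepsilon(\mathscr F\restriction X)$ is the supremum of sizes of such $A\subseteq X$. $\mathrm{fat}_\varepsilon(\mathscr F\,\mathrm{mod}\,\omega_1)$ is the supremum of $n$ for which there exist uncountable $A_1,\dots,A_n\subseteq\Omega$ and $h:\{1,\dots,n\}\to[0,1]$ such that for every $J\subseteq\{1,\dots,n\}$ there is $f_J\in\mathscr F$ with $f_J(x)>h(i)+\varepsilon$ whenever $i\in J$, $x\in A_i$, and $f_J(x)<h(i)-\varepsilon$ whenever $i\notin J$, $x\in A_i$. *)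

From Stdlib Require Import Reals List.
Open Scope R_scope.

Definition countable {T : Type} (P : T -> Prop) : Prop :=
  exists g : nat -> option T, forall x, P x -> exists n, g n = Some x.

Definition fat_shattered {Omega : Type} (F : (Omega -> R) -> Prop)
    (eps : R) (A : list Omega) : Prop :=
  exists h : Omega -> R,
    (forall a, In a A -> 0 <= h a <= 1) /\
    forall B : Omega -> Prop,
      exists f, F f /\
        forall a, In a A ->
          (B a -> f a > h a + eps) /\ (~ B a -> f a < h a - eps).

Definition fat_restr_le {Omega : Type} (F : (Omega -> R) -> Prop)
    (X : Omega -> Prop) (eps : R) (d : nat) : Prop :=
  forall A : list Omega, NoDup A -> (forall a, In a A -> X a) ->
    fat_shattered F eps A -> (length A <= d)%nat.

Definition fat_mod_w1_witness {Omega : Type} (F : (Omega -> R) -> Prop)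
    (eps : R) (n : nat) : Prop :=
  exists (A : nat -> Omega -> Prop) (h : nat -> R),
    (forall i, (i < n)%nat -> ~ countable (A i)) /\
    (forall i, (i < n)%nat -> 0 <= h i <= 1) /\
    forall J : nat -> Prop,
      exists f, F f /\
        forall i, (i < n)%nat -> forall x, A i x ->
          (J i -> f x > h i + eps) /\ (~ J i -> f x < h i - eps).

Definition fat_mod_w1_le {Omega : Type} (F : (Omega -> R) -> Prop)
    (eps : R) (d : nat) : Prop :=
  forall n, fat_mod_w1_witness F eps n -> (n <= d)%nat.

(* (2) => (1): given uncountable A_1, ..., A_n and levels h_i witnessing
   fat_eps(F mod omega_1) >= n, the functions f_J, J ranging over the finitely
   many bit patterns, form a countable subclass F'.  Outside the countable set N
   given by (2) we pick distinct points x_i in A_i; they are eps-fat shattered by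
   F' at the levels h_i, so n <= d.

   (1) => (2): enumerate F' as (f_c).  A code (k, i, q, (c_m)_{m < 2^k}) with q
   rational describes the set of points x cut at level q by the f_(c_m) along
   bit i of m, i.e. f_(c_m) x > q + eps or < q - eps according to that bit.
   There are countably many codes; let N be the union of the countable code sets.
   If x_1, ..., x_k outside N are eps-fat shattered by F', fix a shattering
   function f_(c_m) for every bit pattern m.  Only finitely many strict
   inequalities are involved, so each level h(x_i) can be lowered to a rational
   q_i; then x_i lies in the code set of (k, i, q_i, c), which is therefore
   uncountable, and these k sets with levels q_i give fat_eps(F mod omega_1) >= k. *)
From Stdlib Require Import Reals List Lra Lia ZArith Cantor Classical
  IndefiniteDescription.
Open Scope R_scope.

Lemma countable_nat : countable (fun _ : nat => True).
Proof. exists Some; eauto. Qed.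

Lemma countable_prod {A B : Type} :
  countable (fun _ : A => True) -> countable (fun _ : B => True) ->
  countable (fun _ : A * B => True).
Proof.
  intros [ga Hga] [gb Hgb].
  exists (fun n => let (a, b) := Cantor.of_nat n in
           match ga a, gb b with Some x, Some y => Some (x, y) | _, _ => None end).
  intros [x y] _.
  destruct (Hga x I) as [a Ha], (Hgb y I) as [b Hb].
  exists (Cantor.to_nat (a, b)); rewrite Cantor.cancel_of_to, Ha, Hb; reflexivity.
Qed.

Fixpoint decode_list {A : Type} (g : nat -> option A) (len n : nat) : option (list A) :=
  match len with
  | O => Some nil
  | S len' => let (a, b) := Cantor.of_nat n in
      match g a, decode_list g len' b with
      | Some x, Some t => Some (x :: t)
      | _, _ => None
      end
  end.

Lemma countable_list {A : Type} :
  countable (fun _ : A => True) -> countable (fun _ : list A => True).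
Proof.
  intros [g Hg].
  exists (fun n => let (len, r) := Cantor.of_nat n in decode_list g len r).
  intros l _.
  assert (Hdec : exists r, decode_list g (length l) r = Some l).
  { induction l as [|x l [r Hr]]; [exists 0%nat; reflexivity|].
    destruct (Hg x I) as [a Ha].
    exists (Cantor.to_nat (a, r)); cbn -[Cantor.of_nat Cantor.to_nat].
    rewrite Cantor.cancel_of_to, Ha, Hr; reflexivity. }
  destruct Hdec as [r Hr].
  exists (Cantor.to_nat (length l, r)); rewrite Cantor.cancel_of_to; exact Hr.
Qed.

Lemma countable_union_of_countable {Idx T : Type} (C : Idx -> T -> Prop) :
  countable (fun _ : Idx => True) ->
  countable (fun x => exists i, countable (C i) /\ C i x).
Proof.
  intros [gI HgI].
  destruct (functional_choice (fun (i : Idx) (g : nat -> option T) =>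
              countable (C i) -> forall x, C i x -> exists n, g n = Some x))
    as [enum Henum].
  { intro i; destruct (classic (countable (C i))) as [[g Hg] | Hunc].
    - exists g; auto.
    - exists (fun _ => None); tauto. }
  exists (fun n => let (a, b) := Cantor.of_nat n in
           match gI a with Some i => enum i b | None => None end).
  intros x [i [Hi Hx]].
  destruct (HgI i I) as [a Ha], (Henum i Hi x Hx) as [b Hb].
  exists (Cantor.to_nat (a, b)); rewrite Cantor.cancel_of_to, Ha; exact Hb.
Qed.

Lemma uncountable_point_outside {T : Type} (A N : T -> Prop) (L : list T) :
  ~ countable A -> countable N -> exists x, A x /\ ~ N x /\ ~ In x L.
Proof.
  intros HA [g Hg]; apply NNPP; intro Hnone; apply HA.
  exists (fun n => if Nat.ltb n (length L) then nth_error L n else g (n - length L)%nat).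
  intros x Ax.
  destruct (classic (In x L)) as [Hin | Hout].
  - destruct (In_nth_error _ _ Hin) as [n Hn]; exists n.
    assert (Hlt : (n < length L)%nat) by (apply nth_error_Some; congruence).
    apply Nat.ltb_lt in Hlt; rewrite Hlt; exact Hn.
  - destruct (classic (N x)) as [Nx | Nx]; [|exfalso; eauto].
    destruct (Hg x Nx) as [n Hn]; exists (n + length L)%nat.
    destruct (Nat.ltb_spec (n + length L) (length L)); [lia|].
    replace (n + length L - length L)%nat with n by lia; exact Hn.
Qed.

Lemma uncountable_distinct_points {T : Type} (A : nat -> T -> Prop) (N : T -> Prop)
    (n : nat) :
  (forall i, (i < n)%nat -> ~ countable (A i)) -> countable N ->
  exists L : list T, length L = n /\ NoDup L /\
    forall i x, nth_error L i = Some x -> A i x /\ ~ N x.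
Proof.
  intros HA HN; induction n as [|n IH].
  - exists nil; split; [reflexivity | split; [constructor|]].
    intros [|i] x Hx; discriminate.
  - destruct IH as [L [HL [HD HP]]]; [intros i Hi; apply HA; lia|].
    destruct (uncountable_point_outside (A n) N L) as [x [Ax [Nx Lx]]]; [apply HA; lia|exact HN|].
    exists (L ++ x :: nil); split; [rewrite length_app, HL; simpl; lia | split].
    + apply NoDup_app; [exact HD | repeat constructor; auto |].
      intros y Hy [<- | []]; contradiction.
    + intros i y Hy.
      destruct (Nat.lt_ge_cases i n) as [Hi | Hi].
      * rewrite nth_error_app1 in Hy by lia; exact (HP i y Hy).
      * rewrite nth_error_app2 in Hy by lia; rewrite HL in Hy.
        destruct (i - n)%nat as [|[|k]] eqn:E; simpl in Hy; try discriminate.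
        replace i with n by lia; injection Hy as <-; auto.
Qed.

Lemma NoDup_position {T : Type} (L : list T) :
  NoDup L -> exists pos : T -> nat, forall i x, nth_error L i = Some x -> pos x = i.
Proof.
  intro HD.
  destruct (functional_choice (fun x i => In x L -> nth_error L i = Some x)) as [pos Hpos].
  { intro x; destruct (classic (In x L)) as [Hin | Hout].
    - destruct (In_nth_error _ _ Hin) as [i Hi]; eauto.
    - exists 0%nat; tauto. }
  exists pos; intros i x Hx.
  assert (Hx' : nth_error L (pos x) = Some x) by (apply Hpos; eapply nth_error_In; eauto).
  apply (proj1 (NoDup_nth_error L) HD); [apply nth_error_Some; congruence | congruence].
Qed.

Lemma exists_bits_below (n : nat) (P : nat -> Prop) :
  exists m, (m < 2 ^ n)%nat /\ forall i, (i < n)%nat -> (Nat.testbit m i = true <-> P i).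
Proof.
  assert (Hbits : exists m, forall i, (i < n)%nat -> (Nat.testbit m i = true <-> P i)).
  { induction n as [|n [m Hm]]; [exists 0%nat; intros; lia|].
    destruct (classic (P n)) as [Hp | Hp].
    - exists (Nat.setbit m n); intros i Hi.
      destruct (Nat.eq_dec i n) as [-> | Hne].
      + rewrite Nat.setbit_eq; tauto.
      + rewrite Nat.setbit_neq by lia; apply Hm; lia.
    - exists (Nat.clearbit m n); intros i Hi.
      destruct (Nat.eq_dec i n) as [-> | Hne].
      + rewrite Nat.clearbit_eq; split; [discriminate | tauto].
      + rewrite Nat.clearbit_neq by lia; apply Hm; lia. }
  destruct Hbits as [m Hm].
  exists (m mod 2 ^ n)%nat; split.
  - apply Nat.mod_upper_bound, Nat.pow_nonzero; lia.
  - intros i Hi; rewrite Nat.mod_pow2_bits_low by exact Hi; auto.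
Qed.

Lemma finite_lt_margin (M : nat) (P : nat -> Prop) (g : nat -> R) (c : R) :
  (forall m, (m < M)%nat -> P m -> g m < c) ->
  exists c', c' < c /\ forall m, (m < M)%nat -> P m -> g m <= c'.
Proof.
  induction M as [|M IH]; intro H.
  - exists (c - 1); split; [lra | intros; lia].
  - destruct IH as [c' [Hc' Hle]]; [intros m Hm; apply H; lia|].
    destruct (classic (P M)) as [Hp | Hp].
    + exists (Rmax c' (g M)); split; [apply Rmax_lub_lt; auto|].
      intros m Hm Pm; destruct (Nat.eq_dec m M) as [-> | Hne]; [apply Rmax_r|].
      eapply Rle_trans; [apply Hle; auto; lia | apply Rmax_l].
    + exists c'; split; [exact Hc'|].
      intros m Hm Pm; destruct (Nat.eq_dec m M) as [-> | Hne]; [tauto | apply Hle; auto; lia].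
Qed.

Definition rat_enum (j : nat) : R :=
  let (p, r) := Cantor.of_nat j in INR p / INR (S r).

Lemma rat_enum_nonneg (j : nat) : 0 <= rat_enum j.
Proof.
  unfold rat_enum; destruct (Cantor.of_nat j) as [p r].
  apply Rmult_le_pos; [apply pos_INR | left; apply Rinv_0_lt_compat, lt_0_INR; lia].
Qed.

Lemma nat_floor (y : R) : 0 <= y -> exists p : nat, INR p <= y < INR p + 1.
Proof.
  intro Hy; destruct (base_Int_part y) as [Hle Hgt].
  assert (Hz : (-1 < Int_part y)%Z) by (apply lt_IZR; simpl; lra).
  exists (Z.to_nat (Int_part y)); rewrite INR_IZR_INZ, Z2Nat.id by lia; lra.
Qed.

Lemma rat_enum_approx_below (h delta : R) :
  0 <= h -> 0 < delta -> exists j, h - delta < rat_enum j <= h.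
Proof.
  intros Hh Hdelta.
  destruct (archimed_cor1 delta Hdelta) as [[|r] [Hr Hpos]]; [lia|].
  set (M := INR (S r)).
  assert (HM : 0 < M) by (apply lt_0_INR; lia).
  destruct (nat_floor (h * M)) as [p [Hp1 Hp2]]; [apply Rmult_le_pos; lra|].
  exists (Cantor.to_nat (p, r)); unfold rat_enum; rewrite Cantor.cancel_of_to; fold M in Hr |- *.
  assert (Hq : INR p / M * M = INR p) by (field; lra).
  assert (Hinv : h - INR p / M < / M).
  { apply (Rmult_lt_reg_r M); [exact HM|].
    rewrite Rmult_minus_distr_r, Hq, Rinv_l by lra; lra. }
  split; [lra|].
  apply (Rmult_le_reg_r M); [exact HM|]; rewrite Hq; lra.
Qed.

Lemma rational_level_below (M : nat) (P : nat -> Prop) (v : nat -> R) (h eps : R) :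
  0 <= h ->
  (forall m, (m < M)%nat -> (P m -> v m > h + eps) /\ (~ P m -> v m < h - eps)) ->
  exists j, rat_enum j <= h /\
    forall m, (m < M)%nat -> (P m -> v m > rat_enum j + eps) /\ (~ P m -> v m < rat_enum j - eps).
Proof.
  intros Hh Hsep.
  destruct (finite_lt_margin M (fun m => ~ P m) v (h - eps)) as [c [Hc Hle]].
  { intros m Hm Pm; apply Hsep; auto. }
  destruct (rat_enum_approx_below h (h - eps - c) Hh) as [j [Hj1 Hj2]]; [lra|].
  exists j; split; [exact Hj2|].
  intros m Hm; split; intro Pm.
  - assert (v m > h + eps) by (apply Hsep; auto); lra.
  - specialize (Hle m Hm Pm); lra.
Qed.

Lemma fat_mod_w1_le_of_countable_restr (Omega : Type) (F : (Omega -> R) -> Prop)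
    (eps : R) (d : nat) :
  (forall F' : (Omega -> R) -> Prop,
     (forall f, F' f -> F f) -> countable F' ->
     exists N : Omega -> Prop, countable N /\ fat_restr_le F' (fun x => ~ N x) eps d) ->
  fat_mod_w1_le F eps d.
Proof.
  intros Hrestr n [A [h [HA [Hh HJ]]]].
  destruct (functional_choice _ HJ) as [fJ HfJ].
  pose (fbits := fun m => fJ (fun i => Nat.testbit m i = true)).
  pose (F' := fun f => exists m, f = fbits m).
  destruct (Hrestr F') as [N [HN Hfat]].
  - intros f [m ->]; apply HfJ.
  - exists (fun m => Some (fbits m)); intros f [m ->]; eauto.
  - destruct (uncountable_distinct_points A N n HA HN) as [L [HL [HD HP]]].
    rewrite <- HL; apply Hfat; [exact HD | |].
    { intros a Ha; destruct (In_nth_error _ _ Ha) as [i Hi]; apply (HP i a Hi). }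
    destruct (NoDup_position L HD) as [pos Hpos].
    assert (Hpt : forall a, In a L -> (pos a < n)%nat /\ nth_error L (pos a) = Some a /\ A (pos a) a).
    { intros a Ha; destruct (In_nth_error _ _ Ha) as [i Hi].
      rewrite (Hpos i a Hi), <- HL; split; [apply nth_error_Some; congruence|].
      split; [exact Hi | apply (HP i a Hi)]. }
    exists (fun x => h (pos x)); split; [intros a Ha; apply Hh, Hpt, Ha|].
    intro B.
    destruct (exists_bits_below n (fun i => exists x, nth_error L i = Some x /\ B x))
      as [m [_ Hm]].
    exists (fbits m); split; [exists m; reflexivity|].
    intros a Ha; destruct (Hpt a Ha) as [Hi [Hn Aa]].
    destruct (proj2 (HfJ (fun i => Nat.testbit m i = true)) (pos a) Hi a Aa) as [Hgt Hlt].
    split; intro Ba.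
    + apply Hgt, Hm; eauto.
    + apply Hlt; intro Hbit; apply (Hm _ Hi) in Hbit as [x [Hx Bx]].
      apply Ba; congruence.
Qed.

Section CodeSets.

Variables (Omega : Type) (enum : nat -> option (Omega -> R)) (eps : R).

Definition enum_fun (c : nat) : Omega -> R :=
  match enum c with Some f => f | None => fun _ => 0 end.

Definition threshold_set (k i j : nat) (l : list nat) (x : Omega) : Prop :=
  forall m, (m < 2 ^ k)%nat ->
    (Nat.testbit m i = true -> enum_fun (nth m l 0%nat) x > rat_enum j + eps) /\
    (Nat.testbit m i = false -> enum_fun (nth m l 0%nat) x < rat_enum j - eps).

Definition code_set (code : nat * nat * nat * list nat) : Omega -> Prop :=
  let '(k, i, j, l) := code in threshold_set k i j l.

Definition exceptional_set (x : Omega) : Prop :=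
  exists code, countable (code_set code) /\ code_set code x.

Lemma countable_exceptional_set : countable exceptional_set.
Proof.
  apply countable_union_of_countable.
  repeat apply countable_prod; auto using countable_nat, countable_list.
Qed.

Lemma fat_shattered_threshold_sets (F' : (Omega -> R) -> Prop) (A : list Omega) :
  (forall f, F' f -> exists c, enum c = Some f) ->
  NoDup A -> fat_shattered F' eps A ->
  exists (l : list nat) (j : nat -> nat),
    (forall m, (m < 2 ^ length A)%nat -> F' (enum_fun (nth m l 0%nat))) /\
    forall i x, nth_error A i = Some x ->
      rat_enum (j i) <= 1 /\ threshold_set (length A) i (j i) l x.
Proof.
  intros Hcovers HD [h [Hh Hsh]]; set (k := length A).
  pose (pattern := fun m x => exists i, nth_error A i = Some x /\ Nat.testbit m i = true).
  assert (Hpattern : forall m i x, nth_error A i = Some x ->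
                       (pattern m x <-> Nat.testbit m i = true)).
  { intros m i x Hx; split; [intros [i' [Hx' Hbit]] | intro Hbit; exists i; auto].
    replace i with i'; [exact Hbit|].
    apply (proj1 (NoDup_nth_error A) HD); [apply nth_error_Some|]; congruence. }
  destruct (functional_choice (fun m c => F' (enum_fun c) /\ forall a, In a A ->
      (pattern m a -> enum_fun c a > h a + eps) /\
      (~ pattern m a -> enum_fun c a < h a - eps))) as [c Hc].
  { intro m; destruct (Hsh (pattern m)) as [f [Ff Hf]].
    destruct (Hcovers f Ff) as [c Hc]; exists c; unfold enum_fun; rewrite Hc; auto. }
  set (l := map c (seq 0 (2 ^ k))).
  assert (Hl : forall m, (m < 2 ^ k)%nat -> nth m l 0%nat = c m).
  { intros m Hm; unfold l.
    rewrite (nth_indep _ 0%nat (c 0%nat)) by (rewrite length_map, length_seq; exact Hm).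
    rewrite map_nth, seq_nth by exact Hm; reflexivity. }
  destruct (functional_choice (fun i j => forall x, nth_error A i = Some x ->
      rat_enum j <= 1 /\ threshold_set k i j l x)) as [j Hj].
  2: { exists l, j; split; [intros m Hm; rewrite (Hl m Hm); apply Hc | exact Hj]. }
  intro i; destruct (nth_error A i) as [x|] eqn:Hx; [|exists 0%nat; discriminate].
  assert (Hin : In x A) by (eapply nth_error_In; eauto).
  destruct (rational_level_below (2 ^ k) (fun m => Nat.testbit m i = true)
              (fun m => enum_fun (c m) x) (h x) eps) as [j [Hjh Hsep]].
  { apply Hh, Hin. }
  { intros m _; rewrite <- (Hpattern m i x Hx); apply Hc, Hin. }
  exists j; intros y Hy; replace y with x by congruence.
  split; [destruct (Hh x Hin); lra|].
  intros m Hm; rewrite (Hl m Hm); split; intro Hbit; apply (Hsep m Hm); congruence.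
Qed.

End CodeSets.

Lemma countable_restr_of_fat_mod_w1_le (Omega : Type) (F : (Omega -> R) -> Prop)
    (eps : R) (d : nat) :
  fat_mod_w1_le F eps d ->
  forall F' : (Omega -> R) -> Prop,
    (forall f, F' f -> F f) -> countable F' ->
    exists N : Omega -> Prop, countable N /\ fat_restr_le F' (fun x => ~ N x) eps d.
Proof.
  intros Hfat F' HF' [enum Henum].
  exists (exceptional_set Omega enum eps); split; [apply countable_exceptional_set|].
  intros A HD Hout Hsh.
  destruct (fat_shattered_threshold_sets Omega enum eps F' A Henum HD Hsh) as [l [j [Hl Hj]]].
  apply Hfat.
  exists (fun i => threshold_set Omega enum eps (length A) i (j i) l), (fun i => rat_enum (j i)).
  assert (Hpt : forall i, (i < length A)%nat -> exists x, nth_error A i = Some x)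
    by (intros i Hi; destruct (nth_error A i) eqn:E; [eauto | apply nth_error_Some in Hi; congruence]).
  split; [|split].
  - intros i Hi Hcount; destruct (Hpt i Hi) as [x Hx].
    apply (Hout x (nth_error_In _ _ Hx)).
    exists (length A, i, j i, l); split; [exact Hcount | apply (Hj i x Hx)].
  - intros i Hi; destruct (Hpt i Hi) as [x Hx].
    split; [apply rat_enum_nonneg | apply (Hj i x Hx)].
  - intro J; destruct (exists_bits_below (length A) J) as [m [Hm Hbits]].
    exists (enum_fun Omega enum (nth m l 0%nat)); split; [apply HF', Hl, Hm|].
    intros i Hi x Hx; destruct (Hx m Hm) as [Hgt Hlt].
    split; intro Ji; [apply Hgt, Hbits; auto|].
    apply Hlt; destruct (Nat.testbit m i) eqn:E; [|reflexivity].
    exfalso; apply Ji, Hbits; auto.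
Qed.

(* Neither direction uses that the functions take values in [0, 1] or that [eps > 0]. *)
Theorem mainTheorem18 (Omega : Type) (F : (Omega -> R) -> Prop)
  (HF : forall f, F f -> forall x, 0 <= f x <= 1)
  (eps : R) (Heps : 0 < eps) (d : nat) :
  fat_mod_w1_le F eps d <->
  (forall F' : (Omega -> R) -> Prop,
     (forall f, F' f -> F f) -> countable F' ->
     exists N : Omega -> Prop, countable N /\
       fat_restr_le F' (fun x => ~ N x) eps d).
Proof.
  split.
  - apply countable_restr_of_fat_mod_w1_le.
  - apply fat_mod_w1_le_of_countable_restr.
Qed.
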